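(* Let $P=\mathbb{Q}[x_1,\dots,x_n]$, let $\sigma$ be a term ordering on $\mathbb{T}^n$, let $I$ be an ideal in $P$, and let $G_\sigma$ be its reduced $\sigma$-Gröbner basis. Let $F$ be any finite set of polynomials in $I$, and let $\delta$ be a positive integer such that both $G_\sigma$ and $F$ are contained in $\mathbb{Z}_\delta[x_1,\dots,x_n]$. Let $p$ be a prime number with $p\nmid\delta$. Then: (a) $\operatorname{rad}(\operatorname{den}_\sigma(I))$ divides $\delta$; (b) $\langle \pi_p(F)\rangle \subseteq I_{(p,\sigma)} \subseteq \mathbb{F}_p[x_1,\dots,x_n]$; (c) if there exists a matrix $M$ with entries in $\mathbb{Z}_\delta[x_1,\dots,x_n]$ such that $G_\sigma = F\cdot M$ (viewing $F$ and $G_\sigma$ as row matrices after ordering their elements), then $\langle \pi_p(F)\rangle = I_{(p,\sigma)}$.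
   Context: $\mathbb{T}^n$ is the monoid of power-products in $x_1,\dots,x_n$. For a positive integer $\delta$, $\mathbb{Z}_\delta$ denotes the localization of $\mathbb{Z}$ at the multiplicative system generated by $\delta$. For a prime $p\nmid\delta$, $\pi_p$ denotes the canonical homomorphism $\mathbb{Z}_\delta\to\mathbb{F}_p$ and its coefficientwise extension $\mathbb{Z}_\delta[x_1,\dots,x_n]\to\mathbb{F}_p[x_1,\dots,x_n]$. For a positive integer $N$, $\operatorname{rad}(N)$ is the product of the distinct primes dividing $N$. For $f\in P$, $\operatorname{den}(f)$ is the positive least common multiple of the denominators of the coefficients of $f$ (with $\operatorname{den}(0)=1$); for a set $F$, $\operatorname{den}(F)$ is the lcm of the $\operatorname{den}(f)$, $f\in F$ (with $\operatorname{den}(\emptyset)=1$). The $\sigma$-denominator of $I$ is $\operatorname{den}_\sigma(I)=\operatorname{den}(G_\sigma)$. A prime $p$ is $\sigma$-good for $I$ if $p\nmid \operatorname{den}_\sigma(I)$; for such $p$, $I_{(p,\sigma)}$ denotes the ideal of $\mathbb{F}_p[x_1,\dots,x_n]$ generated by $\pi_p(G_\sigma)$. *)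

From HB Require Import structures.
From mathcomp Require Import all_boot all_order all_algebra.
From mathcomp Require Import mpoly.
Set Implicit Arguments. Unset Strict Implicit. Unset Printing Implicit Defensive.
Import Order.TTheory GRing.Theory Num.Theory.
Local Open Scope ring_scope.

(* A term ordering on the power products T^n = 'X_{1..n}:
   a total order, compatible with multiplication (= addition of exponent
   vectors), and with 1 (the zero exponent vector) as least element
   (which, for a total multiplicative order, is equivalent to being a
   well-ordering by Dickson's lemma). *)
Definition term_order (n : nat) (le : rel 'X_{1..n}) : Prop :=
  [/\ reflexive le, antisymmetric le, transitive le, total le
    & (forall m1 m2 m : 'X_{1..n}, le m1 m2 -> le (m1 + m)%MM (m2 + m)%MM)] /\
  (forall m : 'X_{1..n}, le 0%MM m).

Definition is_lpp (n : nat) (R : ringType) (le : rel 'X_{1..n})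
    (f : {mpoly R[n]}) (m : 'X_{1..n}) : Prop :=
  m \in msupp f /\ (forall m', m' \in msupp f -> le m' m).

Definition is_ideal (R : comRingType) (I : R -> Prop) : Prop :=
  [/\ I 0, (forall f g, I f -> I g -> I (f + g))
    & (forall a f, I f -> I (a * f))].

Definition is_groebner (n : nat) (le : rel 'X_{1..n})
    (I : {mpoly rat[n]} -> Prop) (G : seq {mpoly rat[n]}) : Prop :=
  (forall g, g \in G -> I g) /\
  (forall f, I f -> f != 0 ->
     exists2 g, g \in G &
       exists mg mf, [/\ is_lpp le g mg, is_lpp le f mf & (mg <= mf)%MM]).

Definition is_reduced_groebner (n : nat) (le : rel 'X_{1..n})
    (I : {mpoly rat[n]} -> Prop) (G : seq {mpoly rat[n]}) : Prop :=
  [/\ is_groebner le I G, uniq G,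
      (forall g, g \in G -> exists mg, is_lpp le g mg /\ g@_mg = 1)
    & (forall g g', g \in G -> g' \in G -> g != g' ->
         forall mg' m, is_lpp le g' mg' -> m \in msupp g -> ~~ (mg' <= m)%MM)].

Definition inZd (delta : nat) (q : rat) : Prop :=
  exists k : nat, (absz (denq q) %| delta ^ k)%N.

Definition poly_inZd (n : nat) (delta : nat) (f : {mpoly rat[n]}) : Prop :=
  forall m : 'X_{1..n}, inZd delta f@_m.

(* pi_p : Z_delta -> F_p (meaningful when p does not divide the
   denominator), and its coefficientwise extension. *)
Definition pi_p (p : nat) (q : rat) : 'F_p :=
  (numq q)%:~R / (denq q)%:~R.

Definition pi_poly (n : nat) (p : nat) (f : {mpoly rat[n]}) : {mpoly 'F_p[n]} :=
  map_mpoly (pi_p p) f.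

Definition den_poly (n : nat) (f : {mpoly rat[n]}) : nat :=
  \big[lcmn/1%N]_(m <- msupp f) absz (denq f@_m).

Definition den_seq (n : nat) (F : seq {mpoly rat[n]}) : nat :=
  \big[lcmn/1%N]_(f <- F) den_poly f.

Definition radn (N : nat) : nat := \prod_(q <- primes N) q.

Definition ideal_gen (R : comRingType) (S : seq R) (f : R) : Prop :=
  exists c : seq R, f = \sum_(i < size S) c`_i * S`_i.

From HB Require Import structures.
From mathcomp Require Import all_boot all_order all_algebra.
From mathcomp Require Import mpoly ring.
From Stdlib Require Import Classical ClassicalEpsilon.
Set Implicit Arguments. Unset Strict Implicit. Unset Printing Implicit Defensive.
Import Order.TTheory GRing.Theory Num.Theory.
Local Open Scope ring_scope.

(* Since p does not divide delta, every element of Z_delta has a denominator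
   prime to p, and pi_p is a ring morphism on such rationals, hence on
   polynomials with such coefficients.  The elements of G are monic with
   p-integral coefficients, so the division algorithm by G (which terminates
   because a term ordering is a well-ordering, by Dickson's lemma) writes every
   p-integral element of I, in particular every element of F, as a combination
   of G with p-integral coefficients; applying pi_p gives (b).  When G = F M
   with M over Z_delta, applying pi_p to this identity gives the reverse
   inclusion (c).  For (a), a prime dividing den(G) divides a denominator of a
   coefficient of G, hence a power of delta, hence delta. *)

Lemma numq_cross (x : rat) (a b : int) :
  x * b%:~R = a%:~R -> numq x * b = a * denq x.
Proof.
move=> xb; apply: (@intr_inj rat); rewrite !rmorphM /= numqE -xb.
by rewrite mulrAC.
Qed.

Lemma denq_dvdz (x : rat) (a b : int) :
  x * b%:~R = a%:~R -> (`|denq x| %| `|b|)%N.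
Proof.
move=> /numq_cross /(congr1 absz); rewrite !abszM => cross.
rewrite -(@Gauss_dvdl _ _ `|numq x|); last by rewrite coprime_sym coprime_num_den.
by rewrite mulnC cross dvdn_mull.
Qed.

Lemma mulrD_denq (x y : rat) :
  (x + y) * (denq x * denq y)%:~R = (numq x * denq y + numq y * denq x)%:~R.
Proof. by rewrite rmorphD !rmorphM /= !numqE; ring. Qed.

Lemma mulrM_denq (x y : rat) :
  (x * y) * (denq x * denq y)%:~R = (numq x * numq y)%:~R.
Proof. by rewrite !rmorphM /= !numqE mulrACA. Qed.

(* For prime p this is the local ring Z_(p); asking for coprimality rather
   than non-divisibility makes it a subring for every p. *)
Definition p_integral (p : nat) : {pred rat} := fun x => coprime p `|denq x|.

Lemma pi_p0 p : pi_p p 0 = 0.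
Proof. by rewrite /pi_p mul0r. Qed.

Section PIntegral.
Variable p : nat.

Lemma p_integral_frac (x : rat) (a b : int) :
  coprime p `|b| -> x * b%:~R = a%:~R -> x \in p_integral p.
Proof. by move=> pb /denq_dvdz xb; apply: coprime_dvdr xb pb. Qed.

Lemma coprime_denqM (x y : rat) :
  x \in p_integral p -> y \in p_integral p -> coprime p `|denq x * denq y|.
Proof. by move=> px py; rewrite abszM coprimeMr; apply/andP. Qed.

Fact p_integral_subring : subring_closed (p_integral p).
Proof.
split=> [|x y px py|x y px py].
- by apply: (@p_integral_frac _ 1 1); rewrite ?coprimen1 ?mulr1.
- have pNy : - y \in p_integral p by rewrite unfold_in /= denqN.
  exact: p_integral_frac (coprime_denqM px pNy) (mulrD_denq x (- y)).
- exact: p_integral_frac (coprime_denqM px py) (mulrM_denq x y).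
Qed.

HB.instance Definition _ := GRing.isSubringClosed.Build rat (p_integral p)
  p_integral_subring.

Hypothesis p_pr : prime p.

Lemma Fp_intr_neq0 (b : int) : coprime p `|b| -> (b%:~R : 'F_p) != 0.
Proof.
by rewrite prime_coprime // -(dvdz_pcharf (pchar_Fp p_pr)).
Qed.

Lemma pi_p_frac (x : rat) (a b : int) :
  coprime p `|b| -> x * b%:~R = a%:~R -> pi_p p x = a%:~R / b%:~R.
Proof.
move=> pb xb.
have den0 : ((denq x)%:~R : 'F_p) != 0.
  exact/Fp_intr_neq0/(p_integral_frac pb xb).
have /(congr1 (fun z : int => z%:~R : 'F_p)) := numq_cross xb.
rewrite !rmorphM /= /pi_p => cross.
apply/(canLR (mulfK den0)); rewrite mulrAC -cross mulfK //.
exact: Fp_intr_neq0.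
Qed.

Lemma pi_pD : {in p_integral p &, {morph pi_p p : x y / x + y}}.
Proof.
move=> x y px py /=.
rewrite (pi_p_frac (coprime_denqM px py) (mulrD_denq x y)) /pi_p.
rewrite rmorphD !rmorphM /=.
by field; rewrite !Fp_intr_neq0.
Qed.

Lemma pi_pM : {in p_integral p &, {morph pi_p p : x y / x * y}}.
Proof.
move=> x y px py /=.
rewrite (pi_p_frac (coprime_denqM px py) (mulrM_denq x y)) /pi_p.
rewrite !rmorphM /=.
by field; rewrite !Fp_intr_neq0.
Qed.

End PIntegral.

Lemma mcoeff_map_mpoly_id0 (n : nat) (R S : nzRingType) (f : R -> S)
    (q : {mpoly R[n]}) (m : 'X_{1..n}) :
  f 0 = 0 -> (map_mpoly f q)@_m = f q@_m.
Proof.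
move=> f0; rewrite /map_mpoly /mmap raddf_sum /=.
under eq_bigr => m' _ do rewrite mmap1_id mcoeffCM mcoeffX.
have [qm|qNm] := boolP (m \in msupp q).
  rewrite (bigD1_seq m) //= ?msupp_uniq // eqxx mulr1 big1 ?addr0 //.
  move=> m' /negbTE.
  by rewrite eq_sym => ->; rewrite mulr0.
rewrite memN_msupp_eq0 // f0 big_seq big1 // => m' m'q.
by rewrite (_ : (m' == m) = false) ?mulr0 //; apply: contraNF qNm => /eqP <-.
Qed.

Section PiPoly.
Variables (n p : nat).
Local Notation pi := (@pi_poly n p).

Lemma mcoeff_pi_poly (f : {mpoly rat[n]}) m : (pi f)@_m = pi_p p f@_m.
Proof. exact/mcoeff_map_mpoly_id0/pi_p0. Qed.

Lemma pi_poly0 : pi 0 = 0.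
Proof. by rewrite /pi_poly /map_mpoly /mmap msupp0 big_nil. Qed.

Hypothesis p_pr : prime p.

Lemma pi_polyD : {in mpolyOver n (p_integral p) &, {morph pi : f g / f + g}}.
Proof.
move=> f g /mpolyOverP pf /mpolyOverP pg; apply/mpolyP => m.
(* [rewrite !mcoeff_pi_poly] would try to match [rat] coefficients against
   ['F_p] ones by conversion, which is extremely slow; rewriting right to left
   avoids this. *)
by rewrite mcoeff_pi_poly !mcoeffD pi_pD // -!mcoeff_pi_poly.
Qed.

Lemma pi_poly_sum (I : Type) (r : seq I) (P : pred I) (F : I -> {mpoly rat[n]}) :
  (forall i, P i -> F i \in mpolyOver n (p_integral p)) ->
  pi (\sum_(i <- r | P i) F i) = \sum_(i <- r | P i) pi (F i).
Proof.
apply: (big_morph_in (mpolyOver n (p_integral p))).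
- exact: rpredD.
- exact: rpred0.
- exact: pi_polyD.
- exact: pi_poly0.
Qed.

Lemma pi_polyM : {in mpolyOver n (p_integral p) &, {morph pi : f g / f * g}}.
Proof.
move=> f g /mpolyOverP pf /mpolyOverP pg; apply/mpolyP => m.
rewrite mcoeff_pi_poly !mcoeffM.
rewrite (big_morph_in (p_integral p) _ (@rpredD _ _) (rpred0 _) (pi_pD p_pr)
  (pi_p0 p)) => [|k _]; last by rewrite rpredM.
by apply: eq_bigr => k _; rewrite pi_pM // -!mcoeff_pi_poly.
Qed.

End PiPoly.

Section Combination.
Variable R : comNzRingType.

Definition combination (S : {pred R}) (G : seq R) (f : R) : Prop :=
  exists2 c : 'I_(size G) -> R, (forall i, c i \in S) &
    f = \sum_(i < size G) c i * G`_i.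

Variable S : addrClosed R.

Lemma combination0 (G : seq R) : combination S G 0.
Proof.
by exists (fun=> 0) => [i|]; rewrite ?rpred0 // big1 // => i; rewrite mul0r.
Qed.

Lemma combinationDM (G : seq R) f b g :
  combination S G f -> g \in G -> b \in S -> combination S G (f + b * g).
Proof.
move=> [c Sc ->] gG Sb; rewrite -index_mem in gG.
pose j := Ordinal gG; have -> : g = G`_j by rewrite nth_index // -index_mem.
exists (fun i => if i == j then c i + b else c i) => [i|].
  by case: eqP; rewrite ?rpredD.
rewrite [RHS](bigD1 j) // [X in _ = _ + X](eq_bigr (fun i => c i * G`_i)).
  by rewrite eqxx mulrDl addrAC -bigD1.
by move=> i /negbTE ->.
Qed.

End Combination.

Lemma ideal_gen_map_sum (A B : comNzRingType) (phi : A -> B) (S : seq A)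
    (c : 'I_(size S) -> B) :
  ideal_gen (map phi S) (\sum_(i < size S) c i * phi S`_i).
Proof.
exists [seq c i | i <- enum 'I_(size S)]; rewrite size_map.
apply: eq_bigr => i _; rewrite (nth_map i) ?size_enum_ord // nth_ord_enum.
by rewrite (nth_map 0).
Qed.

Lemma ideal_gen_sub (R : comNzRingType) (S T : seq R) h :
  (forall j : 'I_(size T), ideal_gen S T`_j) -> ideal_gen T h -> ideal_gen S h.
Proof.
move=> /fin_all_exists [d Td] [c ->].
have -> : \sum_(j < size T) c`_j * T`_j =
          \sum_(i < size S) (\sum_(j < size T) c`_j * (d j)`_i) * S`_i.
  under eq_bigr => j _ do rewrite Td big_distrr /=.
  rewrite exchange_big /=; apply: eq_bigr => i _.
  by rewrite big_distrl /=; apply: eq_bigr => j _; rewrite mulrA.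
by have := @ideal_gen_map_sum R R (fun x => x) S; rewrite map_id; apply.
Qed.

Lemma ideal_gen_pi_poly (n p : nat) (S : seq {mpoly rat[n]}) f : prime p ->
  {in S, forall g, g \in mpolyOver n (p_integral p)} ->
  combination (mpolyOver n (p_integral p)) S f ->
  ideal_gen (map (@pi_poly n p) S) (pi_poly p f).
Proof.
move=> p_pr pS [c pc ->].
have pSi (i : 'I_(size S)) : S`_i \in mpolyOver n (p_integral p).
  exact/pS/mem_nth.
rewrite pi_poly_sum // => [|i _]; last by rewrite rpredM.
under eq_bigr => i _ do rewrite pi_polyM //.
exact: ideal_gen_map_sum.
Qed.

Lemma ex_minn_from (u : nat -> nat) (i : nat) :
  exists j, (i <= j)%N /\ forall k, (i <= k)%N -> (u j <= u k)%N.
Proof.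
apply: NNPP => nomin.
suff /(_ (u i) i (leqnn i) (leqnn _)) [] :
  forall w j, (i <= j)%N -> (u j <= w)%N -> False.
elim=> [|w IHw] j ij ujw; apply: nomin; exists j; split=> // k ik; rewrite leqNgt.
  by apply/negP => ukj; move: (leq_trans ukj ujw).
by apply/negP => ukj; apply: (IHw k ik); rewrite -ltnS (leq_trans ukj ujw).
Qed.

Lemma nondecreasing_subseq (u : nat -> nat) :
  exists2 phi : nat -> nat, (forall a, phi a < phi a.+1)%N &
    (forall a, u (phi a) <= u (phi a.+1))%N.
Proof.
have /choice [mi mi_min] := ex_minn_from u.
(* Each term minimizes [u] on the tail after the previous term, which lies
   inside the tail on which the previous term was minimal. *)
pose start := fix start a := if a is a'.+1 then (mi (start a')).+1 else 0%N.
have phi_incr a : (mi (start a) < mi (start a.+1))%N.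
  exact: leq_trans (proj1 (mi_min _)).
exists (mi \o start) => // a /=; apply: (proj2 (mi_min _)).
by apply: leq_trans (proj1 (mi_min _)) (ltnW (phi_incr a)).
Qed.

Lemma dickson (n : nat) (s : nat -> 'X_{1..n}) :
  exists i j, (i < j)%N /\ (s i <= s j)%MM.
Proof.
have sorted_coords k : (k <= n)%N -> exists2 phi : nat -> nat,
    (forall a, phi a < phi a.+1)%N &
    forall i : 'I_n, (i < k)%N -> forall a, (s (phi a) i <= s (phi a.+1) i)%N.
  elim: k => [_|k IHk lt_kn]; first by exists id.
  have [phi phi_incr phi_sorted] := IHk (ltnW lt_kn).
  have [psi psi_incr psi_sorted] :=
    nondecreasing_subseq (fun a => s (phi a) (Ordinal lt_kn)).
  exists (phi \o psi) => [a|i]; first exact: homo_ltn ltn_trans phi_incr _ _ _.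
  rewrite ltnS leq_eqVlt => /orP[/eqP ik a|ik a].
    have -> : i = Ordinal lt_kn by exact: val_inj.
    exact: psi_sorted.
  apply: (homo_leq (f := fun b => s (phi b) i) leqnn leq_trans (phi_sorted i ik)).
  exact: ltnW.
have [phi phi_incr phi_sorted] := sorted_coords n (leqnn n).
exists (phi 0%N), (phi 1%N); split=> //.
by apply/mnm_lepP => i; apply: phi_sorted.
Qed.

Lemma wf_no_descending_chain (T : Type) (R : T -> T -> Prop) :
  (forall s : nat -> T, ~ (forall a, R (s a.+1) (s a))) -> well_founded R.
Proof.
move=> no_chain x; apply: NNPP => Nacc_x.
pose NAcc := {y | ~ Acc R y}.
have /choice [next next_desc] :
    forall y : NAcc, exists z : NAcc, R (sval z) (sval y).
  move=> y; apply: NNPP => no_desc; apply: (svalP y); constructor => z Rzy.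
  by apply: NNPP => Nacc_z; apply: no_desc; exists (exist _ z Nacc_z).
apply: (no_chain (fun a => sval (iter a next (exist _ x Nacc_x)))) => a.
by rewrite iterS; apply: next_desc.
Qed.

Lemma ex_max_seq (T : eqType) (le : rel T) : transitive le -> total le ->
  forall s : seq T, s != [::] -> exists2 m, m \in s & {in s, forall x, le x m}.
Proof.
move=> le_trans le_total; elim=> [//|x [|y s] IHs] _.
  by exists x => [|z]; rewrite ?mem_seq1 // => /eqP ->; rewrite -[le x x]orbb.
have [m ms m_max] := IHs isT.
have [xm|mx] := orP (le_total x m).
  by exists m => [|z]; rewrite in_cons ?ms ?orbT // => /orP[/eqP ->|/m_max].
exists x => [|z]; rewrite ?mem_head // in_cons => /orP[/eqP ->|/m_max zm].
  by rewrite -[le x x]orbb.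
exact: le_trans zm mx.
Qed.

Section TermOrder.
Variables (n : nat) (le : rel 'X_{1..n}).
Hypothesis le_term : term_order le.

Let le_anti : antisymmetric le. Proof. by case: le_term => -[]. Qed.
Let le_trans : transitive le. Proof. by case: le_term => -[]. Qed.
Let le_total : total le. Proof. by case: le_term => -[]. Qed.

Definition term_lt (m1 m2 : 'X_{1..n}) := (m1 != m2) && le m1 m2.

Lemma lem_le (m1 m2 : 'X_{1..n}) : (m1 <= m2)%MM -> le m1 m2.
Proof.
case: le_term => -[_ _ _ _ le_add] le0 /submK m21.
by have := le_add _ _ m1 (le0 (m2 - m1)%MM); rewrite add0m m21.
Qed.

Lemma term_lt_trans : transitive term_lt.
Proof.
move=> m2 m1 m3 /andP[m12 le12] /andP[_ le23].
rewrite /term_lt (le_trans le12 le23) andbT; move: m12; apply: contra_neq => m13.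
by apply: le_anti; rewrite le12 m13.
Qed.

Lemma term_lt_wf : well_founded term_lt.
Proof.
apply: wf_no_descending_chain => s s_desc.
have [i [j [ij sij]]] := dickson s.
have /andP[Nsji le_ji] : term_lt (s j) (s i).
  apply: (homo_ltn (r := fun a b => term_lt b a)) ij => // y x z yx zy.
  exact: term_lt_trans zy yx.
by move: Nsji; rewrite (@le_anti (s j) (s i)) ?eqxx // le_ji lem_le.
Qed.

Lemma lpp_exists (R : nzRingType) (f : {mpoly R[n]}) :
  f != 0 -> exists m, is_lpp le f m.
Proof.
rewrite -msupp_eq0 => /(ex_max_seq le_trans le_total)[m fm m_max].
by exists m.
Qed.

Lemma lpp_uniq (R : nzRingType) (f : {mpoly R[n]}) m1 m2 :
  is_lpp le f m1 -> is_lpp le f m2 -> m1 = m2.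
Proof. by move=> [f1 max1] [f2 max2]; apply: le_anti; rewrite max1 ?max2. Qed.

Lemma msupp_reduction_lt (R : comNzRingType) (f g : {mpoly R[n]}) mf mg :
  is_lpp le f mf -> is_lpp le g mg -> g@_mg = 1 -> (mg <= mf)%MM ->
  {in msupp (f - f@_mf *: 'X_[mf - mg] * g), forall m, term_lt m mf}.
Proof.
case: le_term => -[_ _ _ _ le_add] _ [f_mf f_max] [g_mg g_max] g1 mgf.
have mfE : (mf - mg + mg)%MM = mf by rewrite submK.
have bgE : f@_mf *: 'X_[mf - mg] * g = f@_mf *: (g * 'X_[mf - mg]).
  by rewrite -scalerAl mulrC.
move=> m m_supp; apply/andP; split.
  apply: contraTneq m_supp => ->; rewrite mcoeff_msupp negbK mcoeffB bgE mcoeffZ.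
  have c1 : (g * 'X_[mf - mg])@_mf = 1 by rewrite -[X in _@_X]mfE mcoeffMX.
  by rewrite c1 mulr1 subrr.
move/msuppB_le: m_supp; rewrite mem_cat => /orP[/f_max //|].
rewrite bgE => /msuppZ_le; rewrite (perm_mem (msuppMX g (mf - mg))).
case/mapP=> u /g_max ug ->; rewrite -[X in le _ X]mfE !(addmC (mf - mg)%MM).
exact: le_add.
Qed.

End TermOrder.

Lemma groebner_combination (n : nat) (le : rel 'X_{1..n})
    (I : {mpoly rat[n]} -> Prop) (G : seq {mpoly rat[n]})
    (S : subringClosed rat) :
  term_order le -> is_ideal I -> is_groebner le I G ->
  (forall g, g \in G -> exists mg, is_lpp le g mg /\ g@_mg = 1) ->
  {in G, forall g, g \in mpolyOver n S} ->
  forall f, I f -> f \in mpolyOver n S -> combination (mpolyOver n S) G f.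
Proof.
move=> le_term [_ ID IM] [GI G_lpp] G_monic SG f If Sf.
have [->|f0] := eqVneq f 0; first exact: combination0.
have [mf lpp_f] := lpp_exists le_term f0.
elim/(well_founded_ind (term_lt_wf le_term)): mf f If Sf f0 lpp_f.
move=> mf IH f If Sf f0 lpp_f.
have [g Gg [mg [mf' [lpp_g lpp_f' mgf]]]] := G_lpp f If f0.
have [mg' [lpp_g' g1]] := G_monic g Gg.
rewrite (lpp_uniq le_term lpp_f' lpp_f) in mgf.
rewrite (lpp_uniq le_term lpp_g' lpp_g) in g1.
set b := f@_mf *: 'X_[mf - mg].
have Sb : b \in mpolyOver n S.
  by rewrite mpolyOverZ ?mpolyOverX ?(mpolyOverP _ Sf).
rewrite -(subrK (b * g) f); apply: combinationDM => //.
have [->|r0] := eqVneq (f - b * g) 0; first exact: combination0.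
have [mr lpp_r] := lpp_exists le_term r0.
apply: (IH mr) => //.
- exact: (msupp_reduction_lt le_term lpp_f lpp_g g1 mgf (proj1 lpp_r)).
- by rewrite -mulNr; apply: ID => //; apply/IM/GI.
- by rewrite rpredB // rpredM // SG.
Qed.

Lemma prime_dvd_biglcm (I : Type) (r : seq I) (F : I -> nat) q : prime q ->
  (q %| \big[lcmn/1%N]_(i <- r) F i)%N -> has (fun i => q %| F i)%N r.
Proof.
move=> q_pr; elim: r => [|i r IHr].
  by rewrite big_nil dvdn1 => /eqP q1; rewrite q1 in q_pr.
rewrite big_cons /= => q_lcm.
have : (q %| F i * \big[lcmn/1%N]_(j <- r) F j)%N.
  by apply: dvdn_trans q_lcm _; rewrite dvdn_lcm dvdn_mulr ?dvdn_mull.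
by rewrite Euclid_dvdM // => /orP[-> //|/IHr ->]; rewrite orbT.
Qed.

Lemma radn_dvdn (N d : nat) :
  {in primes N, forall q, q %| d}%N -> (radn N %| d)%N.
Proof.
rewrite /radn; have := primes_uniq N; have := all_prime_primes N.
elim: (primes N) => [|q s IHs] /=; first by rewrite big_nil dvd1n.
move=> /andP[q_pr s_pr] /andP[q_s s_uniq] s_dvd; rewrite big_cons Gauss_dvd.
  by rewrite s_dvd ?mem_head // IHs // => r rs; rewrite s_dvd // in_cons rs orbT.
rewrite prime_coprime // Euclid_dvd_prod // big_has; apply/hasP => -[r rs].
have r_pr : prime r by move/allP: s_pr; apply.
by rewrite dvdn_prime2 // => /eqP qr; rewrite qr rs in q_s.
Qed.

Lemma prime_dvd_den_seq (n d q : nat) (G : seq {mpoly rat[n]}) :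
  (forall g, g \in G -> poly_inZd d g) -> prime q ->
  (q %| den_seq G)%N -> (q %| d)%N.
Proof.
move=> GZ q_pr /(prime_dvd_biglcm q_pr)/hasP[g Gg].
move=> /(prime_dvd_biglcm q_pr)/hasP[m _ q_den].
have [k den_dvd] := GZ g Gg m.
by have := dvdn_trans q_den den_dvd; rewrite Euclid_dvdX // => /andP[].
Qed.

Lemma inZd_p_integral (p d : nat) (x : rat) : prime p -> ~~ (p %| d)%N ->
  inZd d x -> x \in p_integral p.
Proof.
move=> p_pr pNd [k den_dvd]; apply: coprime_dvdr den_dvd _.
by rewrite coprimeXr // prime_coprime.
Qed.

Lemma poly_inZd_p_integral (n p d : nat) (f : {mpoly rat[n]}) :
  prime p -> ~~ (p %| d)%N -> poly_inZd d f -> f \in mpolyOver n (p_integral p).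
Proof.
by move=> p_pr pNd fZ; apply/mpolyOverP => m; apply: inZd_p_integral (fZ m).
Qed.

Theorem theorem2p8 (n : nat) (le : rel 'X_{1..n})
    (I : {mpoly rat[n]} -> Prop) (G F : seq {mpoly rat[n]})
    (delta p : nat) :
  term_order le ->
  is_ideal I ->
  is_reduced_groebner le I G ->
  (forall f, f \in F -> I f) ->
  (0 < delta)%N ->
  (forall g, g \in G -> poly_inZd delta g) ->
  (forall f, f \in F -> poly_inZd delta f) ->
  prime p -> ~~ (p %| delta)%N ->
  [/\ (radn (den_seq G) %| delta)%N,
      (forall h, ideal_gen (map (@pi_poly n p) F) h ->
                 ideal_gen (map (@pi_poly n p) G) h)
    & ((exists M : 'M[{mpoly rat[n]}]_(size F, size G),
          (forall i j, poly_inZd delta (M i j)) /\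
          (forall j : 'I_(size G), G`_j = \sum_(i < size F) F`_i * M i j)) ->
       forall h, ideal_gen (map (@pi_poly n p) F) h <->
                 ideal_gen (map (@pi_poly n p) G) h)].
Proof.
(* The positivity of delta already follows from ~~ (p %| delta). *)
move=> le_term I_ideal [G_groebner _ G_monic _] FI _ GZ FZ p_pr pNd.
have Zp := poly_inZd_p_integral p_pr pNd.
have ZpG : {in G, forall g, g \in mpolyOver n (p_integral p)} by move=> g /GZ /Zp.
have piF_piG h :
    ideal_gen (map (@pi_poly n p) F) h -> ideal_gen (map (@pi_poly n p) G) h.
  apply: ideal_gen_sub => j.
  have Fj : F`_j \in F by rewrite mem_nth // -(size_map (@pi_poly n p)).
  rewrite (nth_map 0) -?(size_map (@pi_poly n p)) //.
  apply: ideal_gen_pi_poly => //.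
  apply: (groebner_combination le_term I_ideal G_groebner G_monic ZpG).
  - exact: FI.
  - exact/Zp/FZ.
split=> [||[M [MZ GM]] h].
- apply: radn_dvdn => q; rewrite mem_primes => /and3P[q_pr _].
  exact: prime_dvd_den_seq.
- exact: piF_piG.
- split; first exact: piF_piG.
  apply: ideal_gen_sub => j.
  have jG : (j < size G)%N by rewrite -(size_map (@pi_poly n p)).
  rewrite (nth_map 0) // (GM (Ordinal jG)); apply: ideal_gen_pi_poly => //.
    by move=> f /FZ /Zp.
  exists (fun i => M i (Ordinal jG)) => [i|]; first exact/Zp/MZ.
  by apply: eq_bigr => i _; rewrite mulrC.
Qed.
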